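(* For a coloured integer $k_x$ and $u,v,n\in\mathbb{N}$, let $d_{k_x}(u,v,n)$ be the number of admissible coloured partitions of size $n$ and weights $u$, $v$ whose largest part $\lambda_1$ satisfies $\lambda_1\le k_x$ in the total order of coloured integers (the empty partition is counted, with $n=u=v=0$), and set $d_{k_x}(u,v,n)=0$ whenever one of $u,v,n$ is negative. Then for all $u,v \in \mathbb{N}$ and all integers $k,n \geq 1$: \begin{align*} d_{(2k+1)_{ab}}(u,v,n)&=d_{(2k)_{b}}(u,v,n)+d_{(2k-1)_{a}}(u-1,v-1,n-2k-1),\\ d_{(2k+1)_{a}}(u,v,n)&=d_{(2k+1)_{ab}}(u,v,n)+d_{(2k)_{ab}}(u-1,v,n-2k-1),\\ d_{(2k+1)_{b^2}}(u,v,n)&=d_{(2k+1)_{a}}(u,v,n)+d_{(2k-1)_{a}}(u,v-2,n-2k-1),\\ d_{(2k+1)_{b}}(u,v,n)&=d_{(2k+1)_{b^2}}(u,v,n)+d_{(2k)_{a}}(u,v-1,n-2k-1),\\ d_{(2k+2)_{ab}}(u,v,n)&= d_{(2k+1)_{b}}(u,v,n)+d_{(2k)_{a}}(u-1,v-1,n-2k-2)+d_{(2k-1)_{a}}(u-1,v-2,n-4k-2),\\ d_{(2k+2)_{a}}(u,v,n)&= d_{(2k+2)_{ab}}(u,v,n)+d_{(2k)_{a}}(u-1,v,n-2k-2)+d_{(2k-1)_{a}}(u-1,v-1,n-4k-2),\\ d_{(2k+3)_{a^2}}(u,v,n)&= d_{(2k+2)_{a}}(u,v,n)+d_{(2k)_{a}}(u-2,v,n-2k-3)+d_{(2k-1)_{a}}(u-2,v-1,n-4k-3),\\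 d_{(2k+2)_{b}}(u,v,n)&=d_{(2k+3)_{a^2}}(u,v,n)+d_{(2k+1)_{a}}(u,v-1,n-2k-2). \end{align*}
   Context: Coloured integers: every positive integer $k$ occurs in the three colours $a$, $b$, $ab$ (written $k_a$, $k_b$, $k_{ab}$). In addition, odd positive integers occur in the colours $a^2$ and $b^2$: $k_{b^2}$ for every odd $k\ge 1$ and $k_{a^2}$ for every odd $k \geq 3$. The integer value of $k_x$ is $k$ and its colour is $x$. These coloured integers are totally ordered by $$1_{ab} < 1_a < 1_{b^2} <1_{b} <2_{ab} < 2_a <3_{a^2} < 2_{b} <3_{ab} < 3_a < 3_{b^2} <3_b <4_{ab}<4_a<5_{a^2}<4_b<5_{ab}<\cdots,$$ that is, for every odd $m\ge1$: $m_{ab}<m_a<m_{b^2}<m_b<(m+1)_{ab}<(m+1)_a<(m+2)_{a^2}<(m+1)_b<(m+2)_{ab}$. Difference conditions: for a coloured integer $\lambda$ (the ''upper'' part) of colour $x$ and a coloured integer $\mu$ (the ''lower'' part) of colour $y$, a minimal difference $A(\lambda,\mu)$ is defined as follows, where the row is determined by the colour and the parity of the integer value of $\lambda$, and the entries are listed for $y = a, b, ab, a^2, b^2$ in this order: - $\lambda$ of colour $a$, odd: $2,2,1,2,2$; - $\lambda$ of colour $b^2$: $2,3,2,2,4$; - $\lambda$ of colour $b$, odd: $1,2,1,2,2$; - $\lambda$ of colour $ab$, even: $2,2,2,3,3$; - $\lambda$ of colour $a$, even: $2,2,2,3,3$; - $\lambda$ of colour $a^2$: $3,3,3,4,4$;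 - $\lambda$ of colour $b$, even: $1,2,1,1,3$; - $\lambda$ of colour $ab$, odd: $2,3,2,2,3$. An admissible coloured partition is a finite (possibly empty) sequence $\lambda_1,\dots,\lambda_s$ of coloured integers, none of which equals $1_{ab}$ or $1_{b^2}$, such that for every $1\le i<s$ the integer values satisfy $\lambda_i-\lambda_{i+1}\ge A(\lambda_i,\lambda_{i+1})$. Its size $n$ is the sum of the integer values of its parts. Its weight $u$ is the number of parts of colour $a$ or $ab$ plus twice the number of parts of colour $a^2$; its weight $v$ is the number of parts of colour $b$ or $ab$ plus twice the number of parts of colour $b^2$. *)

From mathcomp Require Import all_boot all_order all_algebra.
Set Implicit Arguments. Unset Strict Implicit. Unset Printing Implicit Defensive.
Import GRing.Theory Num.Theory.

Inductive colour := Ca | Cb | Cab | Ca2 | Cb2.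
Definition colours : seq colour := [:: Ca; Cb; Cab; Ca2; Cb2].

Definition colint := (nat * colour)%type.
Definition cval (l : colint) : nat := l.1.
Definition ccol (l : colint) : colour := l.2.

Definition valid_colint (l : colint) : bool :=
  match l.2 with
  | Ca | Cb | Cab => 0 < l.1
  | Cb2 => odd l.1
  | Ca2 => odd l.1 && (3 <= l.1)
  end.

(* Position of a coloured integer in the total order
   1_ab < 1_a < 1_b2 < 1_b < 2_ab < 2_a < 3_a2 < 2_b < 3_ab < ...
   For odd m = 2j+1 the block m_ab < m_a < m_b2 < m_b < (m+1)_ab < (m+1)_a
   < (m+2)_a2 < (m+1)_b gets ranks 8j, ..., 8j+7. *)
Definition crank (l : colint) : nat :=
  let k := l.1 in
  if odd k then
    let j := k./2 in
    match l.2 with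
    | Cab => 8 * j | Ca => 8 * j + 1 | Cb2 => 8 * j + 2 | Cb => 8 * j + 3
    | Ca2 => 8 * j - 2
    end
  else
    let j := k./2 - 1 in
    match l.2 with
    | Cab => 8 * j + 4 | Ca => 8 * j + 5 | Cb => 8 * j + 7
    | Ca2 => 8 * j + 6 (* not a coloured integer *)
    | Cb2 => 8 * j + 2 (* not a coloured integer *)
    end.

Definition cle (l m : colint) : bool := crank l <= crank m.

Definition Adiff (l m : colint) : nat :=
  let row :=
    match l.2, odd l.1 with
    | Ca, true => (2, 2, 1, 2, 2)
    | Cb2, _ => (2, 3, 2, 2, 4)
    | Cb, true => (1, 2, 1, 2, 2)
    | Cab, false => (2, 2, 2, 3, 3)
    | Ca, false => (2, 2, 2, 3, 3)
    | Ca2, _ => (3, 3, 3, 4, 4)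
    | Cb, false => (1, 2, 1, 1, 3)
    | Cab, true => (2, 3, 2, 2, 3)
    end in
  match row with (ea, eb, eab, ea2, eb2) =>
    match m.2 with
    | Ca => ea | Cb => eb | Cab => eab | Ca2 => ea2 | Cb2 => eb2
    end
  end.

Definition forbidden_part (l : colint) : bool :=
  match l with
  | (1, Cab) | (1, Cb2) => true
  | _ => false
  end.

Fixpoint diff_ok (s : seq colint) : bool :=
  match s with
  | l :: ((m :: _) as s') => (cval m + Adiff l m <= cval l) && diff_ok s'
  | _ => true
  end.

Definition admissible (s : seq colint) : bool :=
  all valid_colint s && all (fun l => ~~ forbidden_part l) s && diff_ok s.

Definition psize (s : seq colint) : nat := sumn (map cval s).

Definition wu_part (l : colint) : nat :=
  match l.2 with Ca | Cab => 1 | Ca2 => 2 | _ => 0 end.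
Definition wv_part (l : colint) : nat :=
  match l.2 with Cb | Cab => 1 | Cb2 => 2 | _ => 0 end.
Definition weight_u (s : seq colint) : nat := sumn (map wu_part s).
Definition weight_v (s : seq colint) : nat := sumn (map wv_part s).

Definition largest_le (c : colint) (s : seq colint) : bool :=
  if s is l :: _ then cle l c else true.

(* Finite enumeration of candidates: all sequences of length <= n whose
   entries are coloured integers of value in [1, n]; every partition of size n
   is among them, each exactly once. *)
Definition parts_upto (n : nat) : seq colint :=
  [seq l <- flatten [seq [seq (k, x) | x <- colours] | k <- iota 1 n]
     | valid_colint l].

Fixpoint seqs_of_len (m : nat) (L : seq colint) : seq (seq colint) :=
  if m is m'.+1 then flatten [seq [seq x :: s | s <- seqs_of_len m' L] | x <- L]
  else [:: [::]].

Definition candidates (n : nat) : seq (seq colint) :=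
  flatten [seq seqs_of_len m (parts_upto n) | m <- iota 0 n.+1].

Definition dcount (c : colint) (u v n : int) : nat :=
  if (0 <= u)%R && (0 <= v)%R && (0 <= n)%R then
    count (fun s => [&& admissible s, psize s == `|n|%N,
                        weight_u s == `|u|%N, weight_v s == `|v|%N
                      & largest_le c s]) (candidates `|n|%N)
  else 0.

From HB Require Import structures.
From mathcomp Require Import all_boot all_order all_algebra zify.
Set Implicit Arguments. Unset Strict Implicit. Unset Printing Implicit Defensive.

(* Each identity peels off the largest part.  The rank [crank] is a bijection
   from the coloured integers onto the naturals, so the partitions with largest
   part at most [c] are those with largest part at most the predecessor of [c]
   together with those whose largest part is [c].  The latter are [c] followed
   by a partition whose parts are allowed below [c] by the difference
   conditions.  These allowed parts form an initial segment of the order,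
   except below (2k+2)_ab, (2k+2)_a and (2k+3)_a2, where they are the segment
   up to (2k)_a plus the single part (2k)_b, which is peeled off once more. *)

Definition colour_eqb (x y : colour) : bool :=
  match x, y with
  | Ca, Ca | Cb, Cb | Cab, Cab | Ca2, Ca2 | Cb2, Cb2 => true
  | _, _ => false
  end.

Lemma colour_eqP : Equality.axiom colour_eqb.
Proof. by case; case; constructor. Qed.

HB.instance Definition _ := hasDecEq.Build colour colour_eqP.

Lemma colour_eqE (x y : colour) : (x == y) = colour_eqb x y.
Proof. by []. Qed.

Lemma count_uniq_mem_eq (T : eqType) (P : pred T) (s1 s2 : seq T) :
  uniq s1 -> uniq s2 -> {in P, s1 =i s2} -> count P s1 = count P s2.
Proof.
move=> U1 U2 eq12; rewrite -!size_filter; apply/perm_size/uniq_perm;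
  rewrite ?filter_uniq // => x; rewrite !mem_filter.
by case Px: (P x); rewrite //= eq12.
Qed.

Lemma cons_inj (T : Type) (x : T) : injective (cons x).
Proof. by move=> s t []. Qed.

Lemma mem_parts_upto n l :
  (l \in parts_upto n) = valid_colint l && (1 <= cval l <= n).
Proof.
case: l => k x; rewrite mem_filter; congr (_ && _).
apply/flattenP/idP => [[t /mapP [k' Hk' ->]] /mapP [y _ [-> _]]|Hk].
  by rewrite mem_iota add1n ltnS in Hk'.
exists [seq (k, y) | y <- colours].
  by apply/mapP; exists k; rewrite // mem_iota ltnS.
by apply/mapP; exists x; case: x {Hk}.
Qed.

Lemma uniq_parts_upto n : uniq (parts_upto n).
Proof.
apply/filter_uniq/allpairs_uniq; [exact: iota_uniq | by [] |].
by move=> [a b] [c d] _ _ [-> ->].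
Qed.

Lemma mem_seqs_of_len m L s :
  (s \in seqs_of_len m L) = (size s == m) && all (mem L) s.
Proof.
elim: m s => [|m IH] [|x s] //=.
  by apply/negbTE/allpairsP => [[[a b] [_ _]]].
apply/allpairsP/and3P => [[[a b] [/= La Lb [-> ->]]]|[Hs Lx Ls]].
  by move: Lb; rewrite IH => /andP[/eqP -> ->]; rewrite La.
by exists (x, s); rewrite /= IH -eqSS Hs.
Qed.

Lemma uniq_seqs_of_len m L : uniq L -> uniq (seqs_of_len m L).
Proof.
move=> UL; elim: m => [|m IH] //=; apply: allpairs_uniq => //.
by move=> [a b] [c d] _ _ [-> ->].
Qed.

Lemma mem_candidates n s :
  (s \in candidates n) = (size s <= n) && all (mem (parts_upto n)) s.
Proof.
apply/flattenP/andP => [[t /mapP [m Hm ->]]|[Hs Ls]].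
  by rewrite mem_iota ltnS in Hm; rewrite mem_seqs_of_len => /andP[/eqP -> ->].
exists (seqs_of_len (size s) (parts_upto n)); last by rewrite mem_seqs_of_len eqxx.
by apply/mapP; exists (size s); rewrite // mem_iota ltnS.
Qed.

Lemma uniq_candidates n : uniq (candidates n).
Proof.
rewrite /candidates; elim: (iota 0 n.+1) (iota_uniq 0 n.+1) => //= m ms IH.
case/andP=> m_ms Ums; rewrite cat_uniq uniq_seqs_of_len ?uniq_parts_upto //.
rewrite IH // andbT; apply/hasPn => s /flattenP [t /mapP [m' Hm' ->]].
rewrite !mem_seqs_of_len => /andP[/eqP sz_s _]; apply/negP => /andP[/eqP sz_s' _].
by move: m_ms; rewrite -sz_s' sz_s Hm'.
Qed.

Definition good_part (l : colint) : bool := valid_colint l && ~~ forbidden_part l.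

Definition head_in (S : pred colint) (s : seq colint) : bool :=
  if s is l :: _ then S l else true.

Definition allowed_below (p : colint) : pred colint :=
  fun m => cval m + Adiff p m <= cval p.

Lemma admissible_cons p s :
  admissible (p :: s) = [&& good_part p, head_in (allowed_below p) s & admissible s].
Proof.
rewrite /admissible /good_part.
have -> : diff_ok (p :: s) = head_in (allowed_below p) s && diff_ok s by case: s.
by rewrite /=; case: (valid_colint p) (forbidden_part p) (head_in _ s) => [] [] [];
  rewrite //= ?andbF.
Qed.

Lemma good_part_gt0 l : good_part l -> 0 < cval l.
Proof. by case: l => [[|j] []]. Qed.

Lemma admissible_candidate s : admissible s -> s \in candidates (psize s).
Proof.
move=> adm_s; rewrite mem_candidates.
suff /andP[-> /allP all_s] :
    (size s <= psize s) && all (fun l => good_part l && (cval l <= psize s)) s.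
  apply/allP => l /all_s /andP[gl le_l].
  by rewrite /= mem_parts_upto le_l (good_part_gt0 gl); case/andP: gl => ->.
elim: s adm_s => [|l s IH] //; rewrite admissible_cons.
case/and3P=> gl _ /IH /andP[le_s all_s].
have l_gt0 := good_part_gt0 gl.
rewrite /psize /= -/(psize s) gl leq_addr /=; apply/andP; split; first by lia.
apply/allP => m /(allP all_s) /andP[-> le_m].
by rewrite (leq_trans le_m) ?leq_addl.
Qed.

Definition dtop (S : pred colint) (u v n : nat) : nat :=
  count (fun s => [&& admissible s, psize s == n, weight_u s == u,
                      weight_v s == v & head_in S s]) (candidates n).

Definition dstart (p : colint) (u v n : nat) : nat :=
  count (fun s => [&& admissible s, psize s == n, weight_u s == u,
                      weight_v s == v & ohead s == Some p]) (candidates n).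

Definition dn (c : colint) : nat -> nat -> nat -> nat := dtop (cle^~ c).

(* The paper's convention d(u - a, v - b, n - m) = 0 when an argument is
   negative. *)
Definition shift (f : nat -> nat -> nat -> nat) (a b m u v n : nat) : nat :=
  if [&& a <= u, b <= v & m <= n] then f (u - a) (v - b) (n - m) else 0.

Lemma eq_shift f g a b m u v n :
  (forall u v n, f u v n = g u v n) -> shift f a b m u v n = shift g a b m u v n.
Proof. by move=> fg; rewrite /shift fg. Qed.

Lemma shiftD f g a b m u v n :
  shift (fun u v n => f u v n + g u v n) a b m u v n
  = shift f a b m u v n + shift g a b m u v n.
Proof. by rewrite /shift; case: ifP. Qed.

Lemma shift_shift f a b m a' b' m' u v n :
  shift (shift f a' b' m') a b m u v n = shift f (a + a') (b + b') (m + m') u v n.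
Proof. by rewrite /shift !subnDA; repeat case: ifP => ? //; lia. Qed.

Lemma dtop_eq_in S S' u v n :
  {in good_part, S =1 S'} -> dtop S u v n = dtop S' u v n.
Proof.
move=> SS'; apply: eq_count => -[|l s] //=.
case adm: (admissible _) => //=.
by move: adm; rewrite admissible_cons => /and3P[gl _ _]; rewrite SS'.
Qed.

Lemma dtop_split S S' p u v n :
  {in good_part, forall m, S m = S' m || (m == p)} -> ~~ S' p ->
  dtop S u v n = dtop S' u v n + dstart p u v n.
Proof.
move=> defS S'p; rewrite /dtop /dstart -count_predUI.
rewrite [X in _ = _ + X](_ : _ = 0) ?addn0; last first.
  rewrite -(count_pred0 (candidates n)); apply: eq_count => -[|l s] /=.
    by rewrite !andbF.
  have -> : (Some l == Some p) = (l == p) by [].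
  by case: (l =P p) => [->|]; rewrite ?(negbTE S'p) !andbF.
apply: eq_count => s /=; case adm: (admissible s) => //=.
have -> : head_in S s = head_in S' s || (ohead s == Some p).
  by case: s adm => [|l s] //=; rewrite admissible_cons => /and3P[gl _ _]; rewrite defS.
by case: (psize s == n) (weight_u s == u) (weight_v s == v) => [] [] [].
Qed.

Lemma dstart_cons p u v n : good_part p ->
  dstart p u v n
  = shift (dtop (allowed_below p)) (wu_part p) (wv_part p) (cval p) u v n.
Proof.
move=> gp; rewrite /dstart /shift.
set P := (fun s => _).
have -> : count P (candidates n) = count P (map (cons p) (candidates (n - cval p))).
  apply: count_uniq_mem_eq; first exact: uniq_candidates.
    by rewrite map_inj_uniq ?uniq_candidates //; apply: cons_inj.
  move=> s; rewrite [_ \in P]inE => /and5P[adm /eqP sz _ _].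
  case: s adm sz => [|l s] // adm sz /eqP[lp]; rewrite {}lp in adm sz *.
  rewrite (mem_map (@cons_inj _ p)) -sz (admissible_candidate adm).
  move: adm; rewrite admissible_cons => /and3P[_ _ /admissible_candidate].
  by rewrite /psize /= addKn.
rewrite count_map; case: ifP => [/and3P[le_u le_v le_n]|Hg].
  apply: eq_count => s; rewrite /P /= admissible_cons gp eqxx andbT.
  rewrite /psize /weight_u /weight_v /= -/(psize s) -/(weight_u s) -/(weight_v s).
  have eqn_subRL x a b : a <= b -> (x == b - a) = (a + x == b).
    by move=> le_ab; apply/eqP/eqP; lia.
  rewrite !eqn_subRL //.
  by case: (head_in _ _) (admissible s) => [] []; rewrite /= ?andbF ?andbT.
rewrite -(count_pred0 (candidates (n - cval p))); apply: eq_count => s.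
rewrite /P /psize /weight_u /weight_v /=.
apply/negP => /and5P[_ /eqP nE /eqP uE /eqP vE _].
by move: Hg; rewrite -nE -uE -vE !leq_addr.
Qed.

Lemma forbidden_partE l :
  forbidden_part l = (cval l == 1) && ((ccol l == Cab) || (ccol l == Cb2)).
Proof. by case: l => [[|[|j]] []]. Qed.

Ltac case_parity :=
  repeat match goal with |- context [odd ?t] =>
    let H := fresh in have H := odd_double_half t; move: H; case: (odd t) => /= H
  end.

Ltac colint_lia :=
  rewrite /good_part ?forbidden_partE /cle /allowed_below /crank /Adiff
    /cval /ccol /valid_colint /= ?xpair_eqE ?colour_eqE /=; case_parity; lia.

Lemma crank_inj : {in valid_colint &, injective crank}.
Proof.
move=> [i x] [j y] vl vm /eqP; apply: contraTeq.
by move: vl vm; rewrite !unfold_in; case: x; case: y; colint_lia.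
Qed.

Lemma cle_succ p q : valid_colint p -> crank p = (crank q).+1 ->
  {in valid_colint, forall m, cle m p = cle m q || (m == p)}.
Proof.
move=> vp rank_p m vm; rewrite /cle rank_p leq_eqVlt ltnS orbC -rank_p.
by rewrite (inj_in_eq crank_inj).
Qed.

Lemma dn_succ p q u v n : good_part p -> crank p = (crank q).+1 ->
  dn p u v n = dn q u v n
               + shift (dtop (allowed_below p)) (wu_part p) (wv_part p) (cval p) u v n.
Proof.
move=> gp rank_p; rewrite /dn (@dtop_split _ (cle^~ q) p) ?dstart_cons //.
  by move=> m /andP[vm _]; apply: cle_succ => //; case/andP: gp.
by rewrite /cle rank_p ltnn.
Qed.

Lemma dn_succ_below p q r u v n : good_part p -> crank p = (crank q).+1 ->
  {in good_part, allowed_below p =1 cle^~ r} ->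
  dn p u v n = dn q u v n + shift (dn r) (wu_part p) (wv_part p) (cval p) u v n.
Proof.
move=> gp rank_p below_p; rewrite (@dn_succ _ q) //; congr (_ + _).
by apply: eq_shift => u' v' n'; apply: dtop_eq_in.
Qed.

Ltac colint_cases := move=> [? []]; rewrite ?unfold_in; colint_lia.

Section Identities.

Variable k : nat.
Hypothesis k_gt0 : 0 < k.

Lemma dtop_below_even_b u v n :
  dtop (fun m => cle m (2*k, Ca) || (m == (2*k, Cb))) u v n
  = dn (2*k, Ca) u v n + shift (dn (2*k-1, Ca)) 0 1 (2*k) u v n.
Proof.
rewrite (@dtop_split _ (cle^~ (2*k, Ca)) (2*k, Cb)) ?dstart_cons //; try colint_lia.
congr (_ + _); apply: eq_shift => u' v' n'; apply: dtop_eq_in; colint_cases.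
Qed.

Lemma dn_succ_below_even_b p q u v n : good_part p -> crank p = (crank q).+1 ->
  {in good_part, allowed_below p =1 (fun m => cle m (2*k, Ca) || (m == (2*k, Cb)))} ->
  dn p u v n = dn q u v n
               + shift (dn (2*k, Ca)) (wu_part p) (wv_part p) (cval p) u v n
               + shift (dn (2*k-1, Ca)) (wu_part p) (wv_part p).+1 (cval p + 2*k) u v n.
Proof.
move=> gp rank_p below_p; rewrite (@dn_succ _ q) // -addnA.
have -> : shift (dn (2*k-1, Ca)) (wu_part p) (wv_part p).+1 (cval p + 2*k) u v n
          = shift (shift (dn (2*k-1, Ca)) 0 1 (2*k)) (wu_part p) (wv_part p) (cval p) u v n.
  by rewrite shift_shift addn0 addn1.
rewrite -shiftD; congr (_ + _).
by apply: eq_shift => u' v' n'; rewrite -dtop_below_even_b; apply: dtop_eq_in.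
Qed.

Lemma dn_odd_ab u v n :
  dn (2*k+1, Cab) u v n = dn (2*k, Cb) u v n + shift (dn (2*k-1, Ca)) 1 1 (2*k+1) u v n.
Proof.
by rewrite (@dn_succ_below _ (2*k, Cb) (2*k-1, Ca)) //; first [colint_lia | colint_cases].
Qed.

Lemma dn_odd_a u v n :
  dn (2*k+1, Ca) u v n = dn (2*k+1, Cab) u v n + shift (dn (2*k, Cab)) 1 0 (2*k+1) u v n.
Proof.
by rewrite (@dn_succ_below _ (2*k+1, Cab) (2*k, Cab)) //; first [colint_lia | colint_cases].
Qed.

Lemma dn_odd_b2 u v n :
  dn (2*k+1, Cb2) u v n = dn (2*k+1, Ca) u v n + shift (dn (2*k-1, Ca)) 0 2 (2*k+1) u v n.
Proof.
by rewrite (@dn_succ_below _ (2*k+1, Ca) (2*k-1, Ca)) //; first [colint_lia | colint_cases].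
Qed.

Lemma dn_odd_b u v n :
  dn (2*k+1, Cb) u v n = dn (2*k+1, Cb2) u v n + shift (dn (2*k, Ca)) 0 1 (2*k+1) u v n.
Proof.
by rewrite (@dn_succ_below _ (2*k+1, Cb2) (2*k, Ca)) //; first [colint_lia | colint_cases].
Qed.

Lemma dn_even_b u v n :
  dn (2*k+2, Cb) u v n = dn (2*k+3, Ca2) u v n + shift (dn (2*k+1, Ca)) 0 1 (2*k+2) u v n.
Proof.
by rewrite (@dn_succ_below _ (2*k+3, Ca2) (2*k+1, Ca)) //; first [colint_lia | colint_cases].
Qed.

Lemma dn_even_ab u v n :
  dn (2*k+2, Cab) u v n = dn (2*k+1, Cb) u v n + shift (dn (2*k, Ca)) 1 1 (2*k+2) u v n
                          + shift (dn (2*k-1, Ca)) 1 2 (4*k+2) u v n.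
Proof.
rewrite (@dn_succ_below_even_b _ (2*k+1, Cb)) /=; try colint_lia; last by colint_cases.
by rewrite (_ : 2*k+2 + 2*k = 4*k+2) //; lia.
Qed.

Lemma dn_even_a u v n :
  dn (2*k+2, Ca) u v n = dn (2*k+2, Cab) u v n + shift (dn (2*k, Ca)) 1 0 (2*k+2) u v n
                         + shift (dn (2*k-1, Ca)) 1 1 (4*k+2) u v n.
Proof.
rewrite (@dn_succ_below_even_b _ (2*k+2, Cab)) /=; try colint_lia; last by colint_cases.
by rewrite (_ : 2*k+2 + 2*k = 4*k+2) //; lia.
Qed.

Lemma dn_odd_a2 u v n :
  dn (2*k+3, Ca2) u v n = dn (2*k+2, Ca) u v n + shift (dn (2*k, Ca)) 2 0 (2*k+3) u v n
                          + shift (dn (2*k-1, Ca)) 2 1 (4*k+3) u v n.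
Proof.
rewrite (@dn_succ_below_even_b _ (2*k+2, Ca)) /=; try colint_lia; last by colint_cases.
by rewrite (_ : 2*k+3 + 2*k = 4*k+3) //; lia.
Qed.

End Identities.

Import GRing.Theory Num.Theory.
Local Open Scope ring_scope.

Lemma dcount_nat c (u v n : nat) : dcount c u v n = dn c u v n.
Proof.
by rewrite /dcount /dn /dtop !le0z_nat; apply: eq_count => -[].
Qed.

Lemma dcount_shift c (a b m u v n : nat) (x y z : int) :
  x = u%:Z - a%:Z -> y = v%:Z - b%:Z -> z = n%:Z - m%:Z ->
  dcount c x y z = shift (dn c) a b m u v n.
Proof.
move=> -> -> ->; rewrite /shift; case: ifP => [/and3P[au bv mn]|].
  by rewrite !subzn // dcount_nat.
by rewrite /dcount !subr_ge0 !lez_nat -andbA => ->.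
Qed.

Theorem lemma3p1 (u v k n : nat) (hk : (1 <= k)%N) (hn : (1 <= n)%N) :
  let U := (u : int) in let V := (v : int) in let N := (n : int) in
  let K := (k : int) in
  [/\ dcount ((2*k+1)%N, Cab) U V N
        = (dcount ((2*k)%N, Cb) U V N
           + dcount ((2*k-1)%N, Ca) (U-1) (V-1) (N-2*K-1))%N,
      dcount ((2*k+1)%N, Ca) U V N
        = (dcount ((2*k+1)%N, Cab) U V N
           + dcount ((2*k)%N, Cab) (U-1) V (N-2*K-1))%N,
      dcount ((2*k+1)%N, Cb2) U V N
        = (dcount ((2*k+1)%N, Ca) U V N
           + dcount ((2*k-1)%N, Ca) U (V-2) (N-2*K-1))%N,
      dcount ((2*k+1)%N, Cb) U V N
        = (dcount ((2*k+1)%N, Cb2) U V N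
           + dcount ((2*k)%N, Ca) U (V-1) (N-2*K-1))%N
    & [/\ dcount ((2*k+2)%N, Cab) U V N
          = (dcount ((2*k+1)%N, Cb) U V N
             + dcount ((2*k)%N, Ca) (U-1) (V-1) (N-2*K-2)
             + dcount ((2*k-1)%N, Ca) (U-1) (V-2) (N-4*K-2))%N,
        dcount ((2*k+2)%N, Ca) U V N
          = (dcount ((2*k+2)%N, Cab) U V N
             + dcount ((2*k)%N, Ca) (U-1) V (N-2*K-2)
             + dcount ((2*k-1)%N, Ca) (U-1) (V-1) (N-4*K-2))%N,
        dcount ((2*k+3)%N, Ca2) U V N
          = (dcount ((2*k+2)%N, Ca) U V N
             + dcount ((2*k)%N, Ca) (U-2) V (N-2*K-3)
             + dcount ((2*k-1)%N, Ca) (U-2) (V-1) (N-4*K-3))%N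
      & dcount ((2*k+2)%N, Cb) U V N
          = (dcount ((2*k+3)%N, Ca2) U V N
             + dcount ((2*k+1)%N, Ca) U (V-1) (N-2*K-2))%N]].
Proof.
move=> U V N K; rewrite {}/U {}/V {}/N {}/K.
split; [| | | | split]; rewrite !dcount_nat.
- by rewrite (@dcount_shift _ 1 1 (2*k+1) u v n) ?(dn_odd_ab hk) //; lia.
- by rewrite (@dcount_shift _ 1 0 (2*k+1) u v n) ?(dn_odd_a hk) //; lia.
- by rewrite (@dcount_shift _ 0 2 (2*k+1) u v n) ?(dn_odd_b2 hk) //; lia.
- by rewrite (@dcount_shift _ 0 1 (2*k+1) u v n) ?(dn_odd_b hk) //; lia.
- by rewrite (@dcount_shift _ 1 1 (2*k+2) u v n) ?(@dcount_shift _ 1 2 (4*k+2) u v n)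
    ?(dn_even_ab hk) //; lia.
- by rewrite (@dcount_shift _ 1 0 (2*k+2) u v n) ?(@dcount_shift _ 1 1 (4*k+2) u v n)
    ?(dn_even_a hk) //; lia.
- by rewrite (@dcount_shift _ 2 0 (2*k+3) u v n) ?(@dcount_shift _ 2 1 (4*k+3) u v n)
    ?(dn_odd_a2 hk) //; lia.
- by rewrite (@dcount_shift _ 0 1 (2*k+2) u v n) ?(dn_even_b hk) //; lia.
Qed.
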